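(* Let $a_m=\binom{2m-1}{m}$ for $m\ge1$. For $n\ge1$ let $A_n$ be the $(n+1)\times(n+1)$ matrix whose first row is $(1,4,4^2,\dots,4^n)$ and whose row $i+1$ (for $i=1,\dots,n$) is $(a_i,a_{i+1},\dots,a_{i+n})$, and let $A'_n$ be the $(n+1)\times(n+1)$ matrix whose first row is $(1,4,\dots,4^n)$ and whose row $i+1$ (for $i=1,\dots,n$) is $(a_{i+1},a_{i+2},\dots,a_{i+1+n})$. Then for all $n\ge1$: $\det A_n=(-1)^n$ and $\det A'_n=(-1)^n(n+1)$. *)

From mathcomp Require Import all_boot all_order all_algebra.
Set Implicit Arguments. Unset Strict Implicit. Unset Printing Implicit Defensive.
Import GRing.Theory Num.Theory.
Local Open Scope ring_scope.

Definition a_seq (m : nat) : nat := 'C((2 * m).-1, m).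

Definition A_mx (n : nat) : 'M[int]_(n.+1) :=
  \matrix_(i < n.+1, j < n.+1)
    (if i == 0 :> nat then (4 ^ j)%N%:Z else (a_seq (i + j))%:Z).

Definition A'_mx (n : nat) : 'M[int]_(n.+1) :=
  \matrix_(i < n.+1, j < n.+1)
    (if i == 0 :> nat then (4 ^ j)%N%:Z else (a_seq (i.+1 + j))%:Z).

From mathcomp Require Import all_boot all_order all_algebra.
From mathcomp Require Import zify ring.
Set Implicit Arguments. Unset Strict Implicit. Unset Printing Implicit Defensive.
Import GRing.Theory Num.Theory.
Local Open Scope ring_scope.

(* The column operations C_j <- C_j - 4 C_(j-1) turn the first row of A_n
   into (1, 0, ..., 0); since a_(m+1) = 4 a_m - Cat_m, the remaining block
   becomes minus the Hankel matrix (Cat_(i+j-1)) of Catalan numbers, resp.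
   (Cat_(i+j)) for A'_n.  Counting Dyck paths by their height at an
   intermediate time factors the first Hankel matrix as B B^T, with B the
   unitriangular matrix of ballot numbers, and the second one as (B M) B^T,
   with M tridiagonal (2 on the diagonal, 1 next to it), of determinant
   n + 1. *)

(* Number of +-1 paths of length L from height k to height 0 that never go
   below 0. *)
Fixpoint ballot (L k : nat) : int :=
  match L with
  | 0%N => (k == 0%N)%:R
  | L'.+1 => (if k is k'.+1 then ballot L' k' else 0) + ballot L' k.+1
  end.

Lemma ballotS L k :
  ballot L.+1 k = (if k is k'.+1 then ballot L k' else 0) + ballot L k.+1.
Proof. by []. Qed.

Lemma ballotSS L k : ballot L.+2 k.+1 =
  (if k is k'.+1 then ballot L k' else 0) + 2 * ballot L k.+1 + ballot L k.+3.
Proof. by rewrite !ballotS; case: k => [|k] /=; ring. Qed.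

Lemma ballot_small L k : (L < k)%N -> ballot L k = 0.
Proof.
elim: L k => [|L IH] [|k] //= ltLk.
by rewrite !IH ?addr0 //; lia.
Qed.

Lemma ballot_odd L k : odd (L + k) -> ballot L k = 0.
Proof.
elim: L k => [|L IH] [|k] //= oddLk.
- by rewrite add0r IH // addn1 /=; rewrite addn0 in oddLk.
- move: oddLk; rewrite !addnS /= negbK => oddLk.
  by rewrite !IH ?addr0 // !addnS /= negbK.
Qed.

Lemma ballot_binE L d k : L = (k + 2 * d)%N ->
  ballot L k = 'C(L, k + d)%:Z - 'C(L, (k + d).+1)%:Z.
Proof.
elim: L d k => [|L IH] d k defL.
  have [-> ->] : k = 0%N /\ d = 0%N by lia.
  by rewrite /= !bin0 bin1 subr0.
case: k defL => [|k] defL.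
  case: d defL => [|d] defL; first lia.
  rewrite ballotS (IH d 1%N); last lia.
  rewrite add0n !binS.
  have -> : 'C(L, d) = 'C(L, d.+1).
    have -> : d.+1 = (L - d)%N by lia.
    by rewrite bin_sub //; lia.
  rewrite add1n !PoszD; lia.
case: d defL => [|d] defL.
  rewrite ballotS (IH 0%N k); last lia.
  rewrite (@ballot_small _ k.+2); last lia.
  have -> : L = k by lia.
  by rewrite !addn0 !binS (@bin_small k k.+1) ?(@bin_small k k.+2) // binn; lia.
rewrite ballotS (IH d.+1 k); last lia.
rewrite (IH d k.+2); last lia.
have -> : (k.+2 + d = (k + d.+1).+1)%N by lia.
have -> : (k.+1 + d.+1 = (k + d.+1).+1)%N by lia.
by rewrite !binS !PoszD; lia.
Qed.

Lemma ballotnn L : ballot L L = 1.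
Proof. by rewrite (@ballot_binE _ 0) ?addn0 // binn bin_small. Qed.

Lemma ballot_shift p q N : (p < N)%N ->
  \sum_(0 <= k < N.+1) ballot p.+1 k * ballot q k =
  \sum_(0 <= k < N.+1) ballot p k * ballot q.+1 k.
Proof.
move=> ltpN; rewrite big_nat_recl // [RHS]big_nat_recl //.
have splitL : \sum_(0 <= i < N) ballot p.+1 i.+1 * ballot q i.+1 =
    \sum_(0 <= i < N) ballot p i * ballot q i.+1
  + \sum_(0 <= i < N) ballot p i.+2 * ballot q i.+1.
  by rewrite -big_split; apply: eq_bigr => i _; rewrite ballotS mulrDl.
have splitR : \sum_(0 <= i < N) ballot p i.+1 * ballot q.+1 i.+1 =
    \sum_(0 <= i < N) ballot p i.+1 * ballot q i
  + \sum_(0 <= i < N) ballot p i.+1 * ballot q i.+2.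
  by rewrite -big_split; apply: eq_bigr => i _; rewrite ballotS mulrDr.
have reindexL : ballot p 1 * ballot q 0
    + \sum_(0 <= i < N) ballot p i.+2 * ballot q i.+1 =
    \sum_(0 <= i < N) ballot p i.+1 * ballot q i.
  rewrite -(big_nat_recl _ _ (fun i => ballot p i.+1 * ballot q i)) //.
  by rewrite big_nat_recr //= (@ballot_small p N.+1 (ltnW ltpN)) mul0r addr0.
have reindexR : ballot p 0 * ballot q 1
    + \sum_(0 <= i < N) ballot p i.+1 * ballot q i.+2 =
    \sum_(0 <= i < N) ballot p i * ballot q i.+1.
  rewrite -(big_nat_recl _ _ (fun i => ballot p i * ballot q i.+1)) //.
  by rewrite big_nat_recr //= (ballot_small ltpN) mul0r addr0.
rewrite splitL splitR /= !add0r -reindexL -reindexR; ring.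
Qed.

(* Combinatorially: cut a path of length p + q from 0 to 0 at time p.
   The proof moves the steps one at a time from p to q. *)
Lemma ballot_gram p q N : (p < N)%N ->
  \sum_(0 <= k < N) ballot p k * ballot q k = ballot (p + q) 0.
Proof.
elim: p q N => [|p IH] q [|N] //= ltpN.
  rewrite big_nat_recl //= mul1r big1 ?addr0 // => i _.
  by rewrite mul0r.
by rewrite ballot_shift // IH ?addnS //; lia.
Qed.

Lemma sum_nat_pairs {R : nmodType} (f : nat -> R) n :
  \sum_(0 <= k < 2 * n) f k = \sum_(0 <= l < n) (f (2 * l)%N + f (2 * l).+1).
Proof.
elim: n => [|n IH]; first by rewrite !big_geq.
have -> : (2 * n.+1 = (2 * n).+2)%N by lia.
by rewrite !big_nat_recr //= IH addrA.
Qed.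

Lemma ballot_gram_odd p q n : odd p -> (p < 2 * n)%N ->
  \sum_(0 <= l < n) ballot p (2 * l).+1 * ballot q (2 * l).+1 = ballot (p + q) 0.
Proof.
move=> oddp ltpn; rewrite -(ballot_gram q ltpn) sum_nat_pairs.
apply: eq_bigr => l _.
by rewrite (@ballot_odd p (2 * l)) ?mul0r ?add0r // oddD oddM /= oddp.
Qed.

(* ballot (2 m) 0 is the Catalan number Cat_m. *)
Lemma a_seqS m : (0 < m)%N ->
  (a_seq m.+1)%:Z = 4 * (a_seq m)%:Z - ballot (2 * m) 0.
Proof.
case: m => [//|r] _.
rewrite (@ballot_binE _ r.+1 0) ?add0n // /a_seq.
have -> : (2 * r.+2).-1 = (2 * r + 2).+1 by lia.
have -> : (2 * r.+1).-1 = (2 * r).+1 by lia.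
have -> : (2 * r.+1 = 2 * r + 2)%N by lia.
rewrite binS.
have -> : (2 * r + 2 = (2 * r).+2)%N by lia.
rewrite !binS.
have -> : 'C((2 * r).+1, r) = 'C((2 * r).+1, r.+1).
  have -> : r.+1 = ((2 * r).+1 - r)%N by lia.
  by rewrite bin_sub //; lia.
by rewrite !PoszD; lia.
Qed.

Definition square_mx {R : Type} N (f : nat -> nat -> R) : 'M[R]_N :=
  \matrix_(i < N, j < N) f i j.

Lemma mulmx_square {R : pzRingType} N (f g : nat -> nat -> R) :
  square_mx N f *m square_mx N g =
  square_mx N (fun i j => \sum_(0 <= k < N) f i k * g k j).
Proof.
apply/matrixP => i j; rewrite !mxE big_mkord.
by apply: eq_bigr => k _; rewrite !mxE.
Qed.

Lemma det_square_lower {R : comPzRingType} N (f : nat -> nat -> R) :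
  (forall i j, (i < j < N)%N -> f i j = 0) ->
  \det (square_mx N f) = \prod_(0 <= i < N) f i i.
Proof.
move=> f_upper0; rewrite det_trig.
  by rewrite big_mkord; apply: eq_bigr => i _; rewrite mxE.
by apply/is_trig_mxP => i j ltij; rewrite mxE f_upper0 // ltij ltn_ord.
Qed.

Lemma det_square_upper {R : comPzRingType} N (f : nat -> nat -> R) :
  (forall i j, (j < i < N)%N -> f i j = 0) ->
  \det (square_mx N f) = \prod_(0 <= i < N) f i i.
Proof.
move=> f_lower0; rewrite -det_tr.
have -> : (square_mx N f)^T = square_mx N (fun i j => f j i).
  by apply/matrixP => i j; rewrite !mxE.
by apply: det_square_lower => i j ltij; apply: f_lower0.
Qed.

Lemma sum_mul_eq {R : pzRingType} N c (f : nat -> R) :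
  \sum_(0 <= k < N) f k * (k == c)%:R = if (c < N)%N then f c else 0.
Proof.
elim: N => [|N IH]; first by rewrite big_geq.
rewrite big_nat_recr //= IH.
case: (ltngtP c N) => [ltcN|ltNc|->].
- by rewrite mulr0 addr0 ltnS (ltnW ltcN).
- by rewrite mulr0 addr0 ltnS leqNgt ltNc.
- by rewrite mulr1 add0r ltnSn.
Qed.

(* Multiplying by it on the right performs C_j <- C_j - 4 C_(j-1). *)
Definition colsub4 (k j : nat) : int := (k == j)%:R - 4 * (k.+1 == j)%:R.

(* hankel4 0 is A_n and hankel4 1 is A'_n. *)
Definition hankel4 (s i j : nat) : int :=
  if i == 0%N then (4 ^ j)%N%:Z else (a_seq (i + s + j))%:Z.

Definition ballot_low (s : nat) (c : nat -> int) (i l : nat) : int :=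
  if i == 0%N then (l == 0%N)%:R else if l == 0%N then c i
  else - ballot (2 * (i + s)).-1 (2 * l).-1.

Definition ballot_up (l j : nat) : int :=
  if l == 0%N then (j == 0%N)%:R else if j == 0%N then 0
  else ballot (2 * j).-1 (2 * l).-1.

Lemma ballot_lowS s c i l :
  ballot_low s c i.+1 l.+1 = - ballot (2 * (i + s)).+1 (2 * l).+1.
Proof. by rewrite /ballot_low; congr (- ballot _ _); lia. Qed.

Lemma ballot_upS l j : ballot_up l.+1 j.+1 = ballot (2 * j).+1 (2 * l).+1.
Proof. by rewrite /ballot_up; congr (ballot _ _); lia. Qed.

Lemma sum_mul_colsub4 N (r : nat -> int) j : (j < N)%N ->
  \sum_(0 <= k < N) r k * colsub4 k j =
  r j - (if j is j'.+1 then 4 * r j' else 0).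
Proof.
move=> ltjN; rewrite /colsub4.
under eq_bigr do rewrite mulrBr mulrCA.
rewrite sumrB -mulr_sumr sum_mul_eq ltjN; congr (_ - _).
case: j ltjN => [|j] ltjN.
  by rewrite big1 ?mulr0 // => k _; rewrite mulr0.
under eq_bigr do rewrite eqSS.
by rewrite sum_mul_eq (ltnW ltjN).
Qed.

Lemma hankel4_colsub4 s n :
  square_mx n.+1 (hankel4 s) *m square_mx n.+1 colsub4 =
  square_mx n.+1 (ballot_low s (fun i => (a_seq (i + s))%:Z))
    *m square_mx n.+1 ballot_up.
Proof.
rewrite !mulmx_square; apply/matrixP => i j; rewrite !mxE sum_mul_colsub4 //.
move: (ltn_ord i) (ltn_ord j); move: (nat_of_ord i) (nat_of_ord j).
move=> {i j} [|i] [|j] lti ltj; rewrite big_nat_recl //.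
- by rewrite big1 ?addr0 => [|l _]; rewrite /ballot_low /ballot_up ?mul0r.
- rewrite big1 ?addr0 => [|l _]; last by rewrite /ballot_low mul0r.
  by rewrite /hankel4 /ballot_low /ballot_up /= mul1r expnS PoszM subrr.
- rewrite big1 ?addr0 => [|l _]; last by rewrite /ballot_up mulr0.
  by rewrite /hankel4 /ballot_low /ballot_up /= addn0 mulr1.
have -> : ballot_up 0 j.+1 = 0 by [].
rewrite mulr0 add0r.
under eq_bigr do rewrite ballot_lowS ballot_upS mulNr mulrC.
rewrite sumrN ballot_gram_odd ?oddS ?oddM //; last lia.
rewrite /hankel4 -[i.+1 == 0%N]/false.
have -> : ((2 * j).+1 + (2 * (i + s)).+1 = 2 * (i.+1 + s + j))%N by lia.
have -> : (i.+1 + s + j.+1 = (i.+1 + s + j).+1)%N by lia.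
by rewrite a_seqS //=; ring.
Qed.

Definition tridiag (m l : nat) : int :=
  if m == 0%N then (l == 0%N)%:R else if l == 0%N then 0
  else 2 * (m == l)%:R + (m.+1 == l)%:R + (l.+1 == m)%:R.

Lemma tridiagS m l :
  tridiag m.+1 l.+1 = 2 * (m == l)%:R + (m.+1 == l)%:R + (l.+1 == m)%:R.
Proof. by []. Qed.

Lemma tridiag_sym m l : tridiag m l = tridiag l m.
Proof. by case: m l => [|m] [|l] //; rewrite !tridiagS [(m == _)]eq_sym addrAC. Qed.

Lemma sum_mul_tridiag N (g : nat -> int) c : (c < N)%N ->
  \sum_(0 <= k < N) g k * tridiag k.+1 c.+1 =
  2 * g c + (if (c.+1 < N)%N then g c.+1 else 0) +
  (if c is c'.+1 then g c' else 0).
Proof.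
move=> ltcN.
under eq_bigr do rewrite tridiagS !mulrDr mulrCA.
rewrite !big_split /= -mulr_sumr sum_mul_eq ltcN [in RHS]addrAC.
congr (_ + _ + _).
  case: c ltcN => [|c] ltcN.
    by rewrite big1 // => k _; rewrite mulr0.
  under eq_bigr do rewrite eqSS.
  by rewrite sum_mul_eq (ltnW ltcN).
under eq_bigr do rewrite eq_sym.
by rewrite sum_mul_eq.
Qed.

(* Entrywise, this is ballotSS. *)
Lemma ballot_low_tridiag c n :
  square_mx n.+1 (ballot_low 1 c) =
  square_mx n.+1 (ballot_low 0 c) *m square_mx n.+1 tridiag.
Proof.
rewrite mulmx_square; apply/matrixP => i l; rewrite !mxE.
move: (ltn_ord i) (ltn_ord l); move: (nat_of_ord i) (nat_of_ord l).
move=> {i l} [|i] [|l] lti ltl; rewrite big_nat_recl //.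
- by rewrite big1 ?addr0 => [|k _]; rewrite /ballot_low ?mul0r.
- by rewrite big1 ?addr0 => [|k _]; rewrite /ballot_low ?mul0r.
- by rewrite big1 ?addr0 => [|k _]; rewrite /tridiag ?mulr0 // /ballot_low mulr1.
have -> : tridiag 0 l.+1 = 0 by [].
rewrite mulr0 add0r.
under eq_bigr do rewrite ballot_lowS addn0.
rewrite sum_mul_tridiag ?ltnS // ballot_lowS.
have -> : (2 * (i + 1)).+1 = ((2 * i).+1).+2 by lia.
rewrite ballotSS.
have -> : (if (l.+1 < n)%N then - ballot (2 * i).+1 (2 * l.+1).+1 else 0) =
          - ballot (2 * i).+1 (2 * l).+3.
  case: ifP => ltln; first by congr (- ballot _ _); lia.
  by rewrite ballot_small ?oppr0 //; lia.
case: l ltl => [|l] _; first by rewrite muln0 /=; ring.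
have -> : (2 * l.+1 = (2 * l).+2)%N by lia.
by rewrite /=; ring.
Qed.

Definition alt_upper (k l : nat) : int :=
  if k == 0%N then (l == 0%N)%:R else if l == 0%N then 0
  else if (k <= l)%N then (-1) ^+ (k + l) * k%:R else 0.

Lemma sign_double x : (-1) ^+ (x + x) = 1 :> int.
Proof. by rewrite addnn -mul2n exprM sqrrN expr1n. Qed.

Lemma tridiag_alt_upper n m l : (m <= l < n.+1)%N ->
  \sum_(0 <= k < n.+1) tridiag m k * alt_upper k l =
  if m == l then (l.+1)%:R else 0.
Proof.
move=> /andP [leml ltln]; rewrite big_nat_recl //.
case: m leml => [|m] leml.
  rewrite big1 ?addr0 => [|k _]; last by rewrite /tridiag mul0r.
  by case: l leml ltln => [|l] _ _; rewrite /tridiag /alt_upper mul1r.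
have -> : tridiag m.+1 0 = 0 by [].
rewrite mul0r add0r.
case: l leml ltln => [//|l] leml ltln.
under eq_bigr do rewrite tridiag_sym mulrC.
rewrite sum_mul_tridiag; last lia.
rewrite eqSS /alt_upper /=.
case: (ltngtP m l) => [ltml|ltlm|<-].
- have -> : (m.+1 < n)%N by lia.
  have -> : (m < l.+1)%N by lia.
  have -> : (m.+1 < l.+1)%N by lia.
  case: m ltml leml => [|m] ltml _; rewrite !addSn !exprS; first ring.
  have -> : (m < l.+1)%N by lia.
  ring.
- by lia.
- rewrite ltnSn ltnn if_same sign_double.
  case: m leml ltln => [|m] _ _; first by rewrite mulr1 addr0.
  by rewrite ltnW // addnS exprS sign_double !mulrS; ring.
Qed.

Lemma prod_natr_succ N : \prod_(0 <= i < N) ((i.+1)%:R : int) = (N`!)%:R.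
Proof.
elim: N => [|N IH]; first by rewrite big_geq.
by rewrite big_nat_recr //= IH factS natrM mulrC.
Qed.

Lemma det_alt_upper n : \det (square_mx n.+1 alt_upper) = (n`!)%:R.
Proof.
rewrite det_square_upper => [|i j /andP [ltji _]]; last first.
  rewrite /alt_upper; case: i ltji => [//|i] ltji.
  by case: j ltji => [//|j] ltji; rewrite leqNgt ltji.
rewrite big_nat_recl // -prod_natr_succ /alt_upper /= mul1r.
by apply: eq_big_nat => i _; rewrite leqnn sign_double mul1r.
Qed.

(* tridiag *m alt_upper is lower triangular with diagonal 1, 2, ..., n + 1. *)
Lemma det_tridiag n : \det (square_mx n.+1 tridiag) = (n.+1)%:R.
Proof.
have := det_mulmx (square_mx n.+1 tridiag) (square_mx n.+1 alt_upper).
rewrite mulmx_square det_square_lower => [|i j /andP [ltij ltjn]]; last first.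
  by rewrite tridiag_alt_upper ?(ltn_eqF ltij) // (ltnW ltij).
rewrite (eq_big_nat _ _ (F2 := fun i => (i.+1)%:R)) => [|i /andP [_ ltin]];
  last by rewrite tridiag_alt_upper ?eqxx // leqnn.
rewrite prod_natr_succ det_alt_upper factS natrM => detE.
by apply: (@mulIf _ (n`!)%:R); rewrite ?pnatr_eq0 -?lt0n ?fact_gt0.
Qed.

Lemma det_colsub4 n : \det (square_mx n.+1 colsub4) = 1.
Proof.
rewrite det_square_upper => [|i j /andP [ltji _]]; last first.
  by rewrite /colsub4 (gtn_eqF ltji) (@gtn_eqF j i.+1) ?mulr0 ?subr0 //; lia.
by rewrite big1 // => i _; rewrite /colsub4 eqxx (@gtn_eqF i i.+1) // mulr0 subr0.
Qed.

Lemma det_ballot_up n : \det (square_mx n.+1 ballot_up) = 1.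
Proof.
rewrite det_square_upper => [|i j /andP [ltji _]]; last first.
  rewrite /ballot_up; case: i ltji => [//|i] ltji.
  by case: j ltji => [//|j] ltji; rewrite ballot_small //; lia.
by rewrite big1 // => -[|i] _; rewrite /ballot_up // ballotnn.
Qed.

Lemma det_ballot_low n c : \det (square_mx n.+1 (ballot_low 0 c)) = (-1) ^+ n.
Proof.
rewrite det_square_lower => [|i j /andP [ltij _]]; last first.
  rewrite /ballot_low; case: i ltij => [|i] ltij; first by case: j ltij.
  by case: j ltij => [//|j] ltij; rewrite ballot_small ?oppr0 //; lia.
rewrite big_nat_recl // /ballot_low eqxx mul1r.
rewrite (eq_big_nat _ _ (F2 := fun _ => -1)) => [|i _]; last by rewrite addn0 ballotnn.
by rewrite prodr_const_nat subn0.
Qed.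

Theorem lemma8p1 (n : nat) : (1 <= n)%N ->
  \det (A_mx n) = (-1) ^+ n /\ \det (A'_mx n) = (-1) ^+ n * (n.+1)%:R.
Proof.
have A_eq : A_mx n = square_mx n.+1 (hankel4 0).
  by apply/matrixP => i j; rewrite !mxE /hankel4 addn0.
have A'_eq : A'_mx n = square_mx n.+1 (hankel4 1).
  by apply/matrixP => i j; rewrite !mxE /hankel4 addn1.
have det_hankel4 s : \det (square_mx n.+1 (hankel4 s)) =
    \det (square_mx n.+1 (ballot_low s (fun i => (a_seq (i + s))%:Z))).
  have := det_mulmx (square_mx n.+1 (hankel4 s)) (square_mx n.+1 colsub4).
  by rewrite hankel4_colsub4 det_mulmx det_colsub4 det_ballot_up !mulr1.
move=> _; rewrite A_eq A'_eq !det_hankel4 det_ballot_low.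
by rewrite ballot_low_tridiag det_mulmx det_ballot_low det_tridiag.
Qed.
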